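(* Let $\Bbbk$ be a field and let $I\subseteq \Bbbk[x,y,z]$ be a monomial ideal generated in degree $d$ having a linear resolution, with minimal monomial generators $m_1,\ldots,m_r$ listed in tree ordering. For $2\le j\le r$ let $I_j=(m_1,\ldots,m_j)$. If $u,v\in\mathcal G(I_j)$ are on the same level (i.e. $\deg_z u=\deg_z v$), then the graph $G_{I_j}(u,v)$ is connected.
   Context: $\mathcal G(J)$ is the minimal monomial generating set of a monomial ideal $J$. The dual graph $G_J$ has vertex set $\mathcal G(J)$, with $\{f,g\}$ an edge iff $\deg\operatorname{lcm}(f,g)=\deg f+1=\deg g+1$; $G_J(f,g)$ is the induced subgraph of $G_J$ on the generators of $J$ dividing $\operatorname{lcm}(f,g)$. A monomial is on the $c$-th level if its $z$-degree is $c$. Tree ordering (for $I$ generated in degree $d$ and linearly presented, so its generators occupy consecutive levels $c,c+1,\ldots,c+p-1$): the generators are ordered level by level in increasing $z$-degree. On level $c$, generators are ordered by strictly decreasing $x$-degree. For $0<i<p$, on level $c+i$, let $m_{i,1}$ be the generator on level $c+i$ of highest $x$-degree that is joined by an edge of $G_I$ to some generator on level $c+i-1$; put $m_{i,1}$ first, then the generators on level $c+i$ with $x$-degree smaller than that of $m_{i,1}$ in decreasing order of $x$-degree, then the remaining generators on level $c+i$ in increasing order of $x$-degree. *)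

From HB Require Import structures.
From mathcomp Require Import all_boot all_order all_algebra.

Set Implicit Arguments.
Unset Strict Implicit.
Unset Printing Implicit Defensive.

Import GRing.Theory.

(* A monomial x^a y^b z^c of k[x,y,z] is encoded by its exponent triple (a,b,c). *)
Definition mon := (nat * nat * nat)%type.

Definition xdeg (m : mon) : nat := m.1.1.
Definition ydeg (m : mon) : nat := m.1.2.
Definition zdeg (m : mon) : nat := m.2.

Definition ex (m : mon) (i : nat) : nat :=
  match i with 0 => xdeg m | 1 => ydeg m | _ => zdeg m end.

Definition mdeg (m : mon) : nat := (xdeg m + ydeg m + zdeg m)%N.

Definition mdivides (f g : mon) : bool :=
  [&& xdeg f <= xdeg g, ydeg f <= ydeg g & zdeg f <= zdeg g].

Definition mlcm (f g : mon) : mon :=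
  (maxn (xdeg f) (xdeg g), maxn (ydeg f) (ydeg g), maxn (zdeg f) (zdeg g)).

(* A monomial ideal J is given by a finite list of monomial generators. *)
Definition in_ideal (J : seq mon) (m : mon) : bool := has (fun g => mdivides g m) J.

Definition mingens (J : seq mon) : seq mon :=
  [seq h <- undup J | ~~ has (fun g => (g != h) && mdivides g h) J].

Definition dual_edge (f g : mon) : bool :=
  (mdeg (mlcm f g) == (mdeg f).+1) && (mdeg (mlcm f g) == (mdeg g).+1).

Definition GJfg_vertices (J : seq mon) (f g : mon) : seq mon :=
  [seq h <- mingens J | mdivides h (mlcm f g)].

Definition induced_connected (V : seq mon) : Prop :=
  forall a b, a \in V -> b \in V ->
    exists p : seq mon, path (fun x y => dual_edge x y && (y \in V)) a p /\ last a p = b.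

Definition v3 (n : nat) : 'I_3 := inord n.

Definition bsub (b : mon) (F : {set 'I_3}) : mon :=
  (xdeg b - (v3 0 \in F), ydeg b - (v3 1 \in F), zdeg b - (v3 2 \in F))%N.

Definition koszul (J : seq mon) (b : mon) : {set {set 'I_3}} :=
  [set F : {set 'I_3} | [forall i : 'I_3, (i \in F) ==> (0 < ex b i)%N]
                        && in_ideal J (bsub b F)].

Definition faces (D : {set {set 'I_3}}) (n : nat) : seq {set 'I_3} :=
  [seq F <- enum D | #|F : {set 'I_3}| == n].

Definition bd (k : fieldType) (D : {set {set 'I_3}}) (n : nat)
  : 'M[k]_(size (faces D n.+1), size (faces D n)) :=
  \matrix_(p, q)
    (let F := nth set0 (faces D n.+1) p in
     let G := nth set0 (faces D n) q in
     if G \subset F then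
       (\sum_(v in F :\: G) (-1) ^+ #|[set w in F | (nat_of_ord w < nat_of_ord v)%N]|)%R
     else 0%R).

(* dim_k of reduced homology  H~_{n-1}(D; k) *)
Definition hdim (k : fieldType) (D : {set {set 'I_3}}) (n : nat) : nat :=
  (size (faces D n) - (if n is m.+1 then \rank (bd k D m) else 0) - \rank (bd k D n))%N.

(* beta_{i,b}(J) = dim_k H~_{i-1}(K^b(J); k)   (Miller--Sturmfels, Thm 1.34) *)
Definition betti (k : fieldType) (J : seq mon) (i : nat) (b : mon) : nat :=
  hdim k (koszul J b) i.

Definition linear_resolution (k : fieldType) (d : nat) (J : seq mon) : Prop :=
  forall (i : nat) (b : mon), betti k J i b <> 0%N -> mdeg b = (d + i)%N.

Definition level (ms : seq mon) (l : nat) : seq mon := [seq m <- ms | zdeg m == l].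

Definition below (s : seq mon) (m1 : mon) : seq mon := [seq m <- s | xdeg m < xdeg m1].
Definition above (s : seq mon) (m1 : mon) : seq mon := [seq m <- s | xdeg m1 < xdeg m].

Definition tree_ordered (ms : seq mon) : Prop :=
  sorted (fun a b => zdeg a <= zdeg b) ms /\
  let c := zdeg (head (0, 0, 0)%N ms) in
  sorted (fun a b => xdeg b < xdeg a) (level ms c) /\
  forall l : nat, (c < l)%N -> level ms l != [::] ->
    exists m1 : mon,
      [/\ m1 \in level ms l,
          has (dual_edge m1) (level ms l.-1),
          (forall m, m \in level ms l -> has (dual_edge m) (level ms l.-1) ->
             xdeg m <= xdeg m1),
          level ms l = m1 :: (below (level ms l) m1 ++ above (level ms l) m1)
        & sorted (fun a b => xdeg b < xdeg a) (below (level ms l) m1)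
          /\ sorted (fun a b => xdeg a < xdeg b) (above (level ms l) m1)].

(* Any two generators [u], [v] of an ideal with a d-linear resolution are joined in
   [G_I(u,v)], by induction on [deg lcm(u,v)]: otherwise, with [b = lcm(u,v)], the upper
   Koszul complex [K^b(I)] is disconnected, so [beta_{1,b}(I) <> 0] while
   [deg b <> d + 1].  In tree ordering, a generator of [I] dividing [lcm(u,v)] for [u], [v]
   on one level lies on a lower level, or on that level strictly between [u] and [v] in
   x-degree; either way it precedes [u] or [v], so [G_{I_j}(u,v) = G_I(u,v)]. *)

From mathcomp Require Import all_boot all_order all_algebra.
From mathcomp Require Import zify.
From Stdlib Require Import Classical ClassicalEpsilon.

Set Implicit Arguments.
Unset Strict Implicit.
Unset Printing Implicit Defensive.

(* [b / x_a]; truncated subtraction makes it [b] itself when [x_a] does not divide [b]. *)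
Definition mquo (b : mon) (a : nat) : mon :=
  (xdeg b - (a == 0), ydeg b - (a == 1), zdeg b - (a == 2)).

Definition mquo_compl (b : mon) (m : nat) : mon :=
  (xdeg b - (m != 0), ydeg b - (m != 1), zdeg b - (m != 2)).

Ltac mon_lia :=
  unfold mquo, mquo_compl, mdivides, mlcm, mdeg, ex, xdeg, ydeg, zdeg in *; simpl in *; lia.

Lemma mdivides_trans f g h : mdivides f g -> mdivides g h -> mdivides f h.
Proof. mon_lia. Qed.

Lemma mdivides_deg f g : mdivides f g -> mdeg f <= mdeg g.
Proof. mon_lia. Qed.

Lemma mdivides_eq_of_deg f g : mdivides f g -> mdeg g <= mdeg f -> f = g.
Proof.
case: f => [[f1 f2] f3]; case: g => [[g1 g2] g3] fg gf.
congr (_, _, _); mon_lia.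
Qed.

Lemma mdivides_lcml f g : mdivides f (mlcm f g).
Proof. mon_lia. Qed.

Lemma mdivides_lcmr f g : mdivides g (mlcm f g).
Proof. mon_lia. Qed.

Lemma mdivides_lcm f g h : mdivides f h -> mdivides g h -> mdivides (mlcm f g) h.
Proof. mon_lia. Qed.

Lemma mquo_dvd b a : mdivides (mquo b a) b.
Proof. mon_lia. Qed.

Lemma mdeg_mquo b a : a < 3 -> 0 < ex b a -> mdeg (mquo b a) < mdeg b.
Proof. by case: a => [|[|[|a]]] //= _; mon_lia. Qed.

Lemma mquo_compl_dvd b m a : a != m -> mdivides (mquo_compl b m) (mquo b a).
Proof. by case: a => [|[|[|a]]]; case: m => [|[|[|m]]] //= _; mon_lia. Qed.

Lemma proper_dvd_mquo h b : mdivides h b -> mdeg h < mdeg b ->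
  exists a, [/\ a < 3, 0 < ex b a & mdivides h (mquo b a)].
Proof.
move=> hb hlt.
case: (ltnP (xdeg h) (xdeg b)) => [x_lt | x_ge].
  by exists 0; split=> //; mon_lia.
case: (ltnP (ydeg h) (ydeg b)) => [y_lt | y_ge].
  by exists 1; split=> //; mon_lia.
by exists 2; split=> //; mon_lia.
Qed.

Lemma lcm_divisor_between u v h :
  mdeg h = mdeg u -> mdeg h = mdeg v -> zdeg h = zdeg u -> zdeg h = zdeg v ->
  mdivides h (mlcm u v) -> h != u -> h != v ->
  (xdeg u < xdeg h < xdeg v) || (xdeg v < xdeg h < xdeg u).
Proof.
case: h => [[h1 h2] h3]; case: u => [[u1 u2] u3]; case: v => [[v1 v2] v3].
rewrite !xpair_eqE; mon_lia.
Qed.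

Lemma v3_inj_eq a c : a < 3 -> c < 3 -> (v3 a == v3 c) = (a == c).
Proof. by move=> a3 c3; rewrite -val_eqE /= !inordK. Qed.

Lemma v3K a : a < 3 -> nat_of_ord (v3 a) = a.
Proof. by move=> a3; rewrite /v3 inordK. Qed.

Lemma card_set_I3 (P : pred 'I_3) :
  #|[set i | P i]| = (P (v3 0) + P (v3 1) + P (v3 2))%N.
Proof.
rewrite -sum1_card big_mkcond /= !big_ord_recr big_ord0 /= !inE.
by congr (_ + _ + _ + _)%N; congr (if P _ then _ else _); apply: val_inj; rewrite /= inordK.
Qed.

Lemma size_faces (D : {set {set 'I_3}}) n :
  size (faces D n) = #|[set F in D | #|F| == n]|.
Proof.
rewrite /faces cardE /enum_mem -filter_predI /=.
by congr size; apply: eq_filter => F; rewrite !inE andbC.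
Qed.

Lemma card_faces0 (D : {set {set 'I_3}}) : #|[set F in D | #|F| == 0]| <= 1.
Proof.
rewrite -[leqRHS](cards1 (set0 : {set 'I_3})); apply/subset_leq_card/subsetP => F.
by rewrite !inE => /andP[_ /eqP/cards0_eq ->].
Qed.

Lemma card_faces1 (D : {set {set 'I_3}}) :
  #|[set F in D | #|F| == 1]| = #|[set i | [set i] \in D]|.
Proof.
have -> : [set F in D | #|F| == 1] = [set [set i] | i in [set i | [set i] \in D]].
  apply/setP => F; rewrite !inE; apply/andP/imsetP.
    by case=> FD /cards1P [i Fi]; exists i; rewrite // inE -Fi.
  by case=> i; rewrite inE => iD ->; rewrite iD cards1.
by rewrite card_imset //; apply: set1_inj.
Qed.

(* A 2-subset of a 3-set is the complement of a point. *)
Lemma card_faces2 (D : {set {set 'I_3}}) :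
  #|[set F in D | #|F| == 2]| = #|[set i | ~: [set i] \in D]|.
Proof.
have -> : [set F in D | #|F| == 2] = [set ~: [set i] | i in [set i | ~: [set i] \in D]].
  apply/setP => F; rewrite !inE; apply/andP/imsetP.
    case=> FD F2; have : #|~: F| == 1 by rewrite cardsCs setCK card_ord (eqP F2).
    by case/cards1P => i Fi; exists i; rewrite ?inE -Fi setCK.
  by case=> i; rewrite inE => iD ->; rewrite iD cardsCs setCK cards1 card_ord.
by rewrite card_imset //; move=> i j /setC_inj; apply: set1_inj.
Qed.

Lemma hdim1_gt0_of_card (k : fieldType) (D : {set {set 'I_3}}) :
  #|[set i | ~: [set i] \in D]| + 2 <= #|[set i | [set i] \in D]| -> 0 < hdim k D 1.
Proof.
move=> many_vertices; rewrite /hdim.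
move: (rank_leq_col (bd k D 0)) (rank_leq_row (bd k D 1)) (card_faces0 D).
move: (\rank _) (\rank _) => rank0 rank1.
rewrite !size_faces card_faces1 card_faces2; lia.
Qed.

(* [s_i]: vertex [i] is present, [r_i]: its class, [e_i]: the edge opposite [i] is present. *)
Lemma three_vertex_split_count (s0 s1 s2 e0 e1 e2 r0 r1 r2 : bool) :
  [|| s0 && r0, s1 && r1 | s2 && r2] -> [|| s0 && ~~ r0, s1 && ~~ r1 | s2 && ~~ r2] ->
  (e0 -> [&& s1, s2 & r1 == r2]) -> (e1 -> [&& s0, s2 & r0 == r2]) ->
  (e2 -> [&& s0, s1 & r0 == r1]) ->
  e0 + e1 + e2 + 2 <= s0 + s1 + s2.
Proof.
by case: s0 s1 s2 e0 e1 e2 r0 r1 r2 => [] [] [] [] [] [] [] [] [] //= _ _ E0 E1 E2;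
  do ?[by move: (E0 isT) | by move: (E1 isT) | by move: (E2 isT)].
Qed.

(* Edges are indexed by their missing vertex [m]: a complex on three vertices split
   into two nonempty classes joined by no edge has a nonzero [H~_0]. *)
Lemma hdim1_gt0_of_split (k : fieldType) (D : {set {set 'I_3}}) (r : nat -> bool) :
  (exists2 a, a < 3 & ([set v3 a] \in D) && r a) ->
  (exists2 a, a < 3 & ([set v3 a] \in D) && ~~ r a) ->
  (forall m a c, [&& m < 3, a < 3, c < 3, a != m & c != m] ->
     ~: [set v3 m] \in D -> ([set v3 a] \in D) && (r a == r c)) ->
  0 < hdim k D 1.
Proof.
move=> [a a3 Da] [c c3 Dc] edge; apply: hdim1_gt0_of_card; rewrite !card_set_I3.
apply: (three_vertex_split_count (r0 := r 0) (r1 := r 1) (r2 := r 2)).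
- by move: a3 Da; case: a => [|[|[|a]]] //= _ ->; rewrite ?orbT.
- by move: c3 Dc; case: c => [|[|[|c]]] //= _ ->; rewrite ?orbT.
- by move=> E; case/andP: (edge 0 1 2 isT E) => -> ->; case/andP: (edge 0 2 1 isT E) => ->.
- by move=> E; case/andP: (edge 1 0 2 isT E) => -> ->; case/andP: (edge 1 2 0 isT E) => ->.
- by move=> E; case/andP: (edge 2 0 1 isT E) => -> ->; case/andP: (edge 2 1 0 isT E) => ->.
Qed.

Lemma koszul_vertex J b a : a < 3 ->
  ([set v3 a] \in koszul J b) = (0 < ex b a) && in_ideal J (mquo b a).
Proof.
move=> a3; rewrite inE; congr andb.
  apply/forallP/idP => [/(_ (v3 a)) | pos i]; first by rewrite in_set1 eqxx v3K.
  by apply/implyP; rewrite in_set1 => /eqP ->; rewrite v3K.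
by rewrite /bsub /mquo !in_set1 !v3_inj_eq // ![_ == a]eq_sym.
Qed.

Lemma koszul_edge J b m : m < 3 -> ~: [set v3 m] \in koszul J b ->
  in_ideal J (mquo_compl b m) /\ (forall a, a < 3 -> a != m -> 0 < ex b a).
Proof.
move=> m3; rewrite inE => /andP[/forallP pos inJ]; split.
  by move: inJ; rewrite /bsub /mquo_compl !in_setC !in_set1 !v3_inj_eq // ![_ == m]eq_sym.
move=> a a3 am; move: (pos (v3 a)).
by rewrite in_setC in_set1 v3_inj_eq // am v3K.
Qed.

Section Linked.
Variables (T : Type) (e : rel T).

Definition linked (W : pred T) (a c : T) : Prop :=
  exists p, [/\ W a, all W p, path e a p & last a p = c].

Lemma linked_refl (W : pred T) a : W a -> linked W a a.
Proof. by move=> Wa; exists [::]. Qed.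

Lemma linked_edge (W : pred T) a c : W a -> W c -> e a c -> linked W a c.
Proof. by move=> Wa Wc ac; exists [:: c]; rewrite /= Wc ac. Qed.

Lemma linked_trans (W : pred T) a b c : linked W a b -> linked W b c -> linked W a c.
Proof.
case=> p [Wa Wp ap <-] [q [_ Wq bq <-]]; exists (p ++ q).
by rewrite all_cat Wp Wq cat_path ap bq last_cat.
Qed.

Lemma linked_sub (W W' : pred T) a c :
  subpred W W' -> linked W a c -> linked W' a c.
Proof.
move=> WW' [p [Wa Wp ap pc]]; exists p; split=> //; first exact: WW'.
exact: sub_all Wp.
Qed.

End Linked.

Lemma induced_connected_of_linked (V : seq mon) :
  (forall a c, a \in V -> c \in V -> linked dual_edge (mem V) a c) -> induced_connected V.
Proof.
move=> lnk a c aV cV; have [p [_ Vp ap <-]] := lnk a c aV cV.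
exists p; split=> //; elim: p a ap {aV} Vp => //= x p IHp a /andP[ax xp] /andP[xV Vp].
by rewrite ax xV IHp.
Qed.

Definition gens_dividing (ms : seq mon) (b : mon) : pred mon :=
  fun h => (h \in ms) && mdivides h b.

Lemma gens_dividing_sub ms b b' :
  mdivides b b' -> subpred (gens_dividing ms b) (gens_dividing ms b').
Proof. by move=> bb' h /andP[hms hb]; rewrite /gens_dividing hms (mdivides_trans hb). Qed.

Section LinearResolution.
Variables (k : fieldType) (d : nat) (ms : seq mon).
Hypothesis ms_deg : all (fun m => mdeg m == d) ms.
Hypothesis ms_lin : linear_resolution k d ms.

Lemma mdeg_gen m : m \in ms -> mdeg m = d.
Proof. by move=> mms; apply/eqP/(allP ms_deg). Qed.

Section Split.
Variables (b u v : mon).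
Let W := gens_dividing ms b.
Hypotheses (Wu : W u) (Wv : W v) (deg_b : d < mdeg b).
Hypothesis pieces_linked : forall a, a < 3 -> 0 < ex b a -> forall g h,
  gens_dividing ms (mquo b a) g -> gens_dividing ms (mquo b a) h -> linked dual_edge W g h.

Lemma koszul_vertex_of_gen w : W w ->
  exists2 a, a < 3 & ([set v3 a] \in koszul ms b) && gens_dividing ms (mquo b a) w.
Proof.
case/andP=> wms wb; have [|a [a3 pos wa]] := proper_dvd_mquo wb; first by rewrite mdeg_gen.
exists a; rewrite // koszul_vertex // pos /gens_dividing wms wa !andbT.
by apply/hasP; exists w.
Qed.

(* The Koszul complex [K^b] is disconnected: put [x_a] on [u]'s side when some
   generator dividing [b / x_a] is linked to [u]; then [u] and [v] lie on different
   sides, and a common generator below an edge puts both endpoints on the same side. *)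
Lemma betti1_gt0_of_unlinked : ~ linked dual_edge W u v -> 0 < betti k ms 1 b.
Proof.
move=> not_uv.
pose R a := exists2 g, gens_dividing ms (mquo b a) g & linked dual_edge W u g.
pose r a : bool := if excluded_middle_informative (R a) then true else false.
have rP a : reflect (R a) (r a).
  by rewrite /r; case: excluded_middle_informative => ?; constructor.
apply: (@hdim1_gt0_of_split _ _ r).
- have [a a3 /andP[Ka ua]] := koszul_vertex_of_gen Wu.
  by exists a; rewrite // Ka; apply/rP; exists u; last exact: linked_refl.
- have [a a3 /andP[Ka va]] := koszul_vertex_of_gen Wv.
  exists a; rewrite // Ka; apply/rP=> -[g ga ug]; apply: not_uv.
  move: Ka; rewrite koszul_vertex // => /andP[pos _].
  exact: linked_trans ug (pieces_linked a3 pos ga va).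
move=> m a c /and5P[m3 a3 c3 am cm] /(koszul_edge m3) [/hasP[h hms hb] pos].
have h_piece a' : a' != m -> gens_dividing ms (mquo b a') h.
  by move=> a'm; rewrite /gens_dividing hms (mdivides_trans hb) ?mquo_compl_dvd.
have r_move a' c' : a' < 3 -> a' != m -> c' != m -> r a' -> r c'.
  move=> a'3 a'm c'm /rP[g ga' ug]; apply/rP; exists h; first exact: h_piece.
  exact: linked_trans ug (pieces_linked a'3 (pos a' a'3 a'm) ga' (h_piece a' a'm)).
rewrite koszul_vertex // pos //=; apply/andP; split.
  by apply/hasP; exists h; rewrite // (andP (h_piece a am)).2.
by apply/eqP; apply/idP/idP; apply: r_move.
Qed.

End Split.

Lemma lcm_linked u v :
  u \in ms -> v \in ms -> linked dual_edge (gens_dividing ms (mlcm u v)) u v.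
Proof.
have [n] := ubnP (mdeg (mlcm u v)); elim: n u v => // n IHn u v lt_n ums vms.
set b := mlcm u v; set W := gens_dividing ms b.
have Wu : W u by rewrite /W /gens_dividing ums mdivides_lcml.
have Wv : W v by rewrite /W /gens_dividing vms mdivides_lcmr.
have [<- | uv] := eqVneq u v; first exact: linked_refl.
case: (classic (linked dual_edge W u v)) => // not_uv; exfalso.
have deg_b : d < mdeg b.
  rewrite ltnNge; apply: contra_neqN uv => bd.
  have ub : u = b by apply: mdivides_eq_of_deg (mdivides_lcml u v) _; rewrite (mdeg_gen ums).
  have vb : v = b by apply: mdivides_eq_of_deg (mdivides_lcmr u v) _; rewrite (mdeg_gen vms).
  by rewrite {1}ub vb.
have pieces a : a < 3 -> 0 < ex b a -> forall g h,
    gens_dividing ms (mquo b a) g -> gens_dividing ms (mquo b a) h -> linked dual_edge W g h.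
  move=> a3 pos g h /andP[gms ga] /andP[hms ha].
  have gh_dvd : mdivides (mlcm g h) (mquo b a) by apply: mdivides_lcm.
  apply: linked_sub (gens_dividing_sub (mdivides_trans gh_dvd (mquo_dvd b a))) _.
  apply: IHn => //; apply: leq_ltn_trans (mdivides_deg gh_dvd) _.
  by apply: leq_trans (mdeg_mquo a3 pos) _; rewrite -ltnS.
have deg_b1 : mdeg b = d + 1.
  apply: ms_lin; apply/eqP; rewrite -lt0n.
  exact: betti1_gt0_of_unlinked Wu Wv deg_b pieces not_uv.
apply: not_uv; apply: linked_edge => //.
by rewrite /dual_edge -/b deg_b1 addn1 (mdeg_gen ums) (mdeg_gen vms) eqxx.
Qed.

Lemma gens_dividing_linked b u v :
  gens_dividing ms b u -> gens_dividing ms b v -> linked dual_edge (gens_dividing ms b) u v.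
Proof.
move=> /andP[ums ub] /andP[vms vb].
exact: linked_sub (gens_dividing_sub (mdivides_lcm ub vb)) (lcm_linked ums vms).
Qed.

End LinearResolution.

Lemma pairwise_filterE (T : Type) (P : pred T) (r : rel T) (s : seq T) :
  pairwise r (filter P s) = pairwise (fun x y => P x ==> P y ==> r x y) s.
Proof.
elim: s => //= x s IHs; case: (P x) => /=; rewrite IHs //.
  by rewrite all_filter.
by rewrite (@eq_all _ _ predT) ?all_predT.
Qed.

Lemma pairwise_index (T : eqType) (r : rel T) (s : seq T) x y :
  pairwise r s -> x \in s -> y \in s -> index x s < index y s -> r x y.
Proof.
move=> /(pairwiseP x) rs xs ys; rewrite -{2}(nth_index x xs) -{2}(nth_index x ys).
by apply: rs; rewrite inE index_mem.
Qed.

Lemma zdeg_leq_trans : transitive (fun a b : mon => zdeg a <= zdeg b).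
Proof. by move=> ? ? ?; apply: leq_trans. Qed.

(* The tree ordering of a level as one relation: each generator lies beyond all earlier
   generators of its level in x-degree, above them if [up] holds, below them otherwise. *)
Definition xbeyond (up : pred mon) (w h : mon) : bool :=
  if up h then xdeg w < xdeg h else xdeg h < xdeg w.

Lemma tree_ordered_level ms l :
  tree_ordered ms -> exists up, pairwise (xbeyond up) (level ms l).
Proof.
case=> zsorted [base upper].
have c_min : all (fun m => zdeg (head (0, 0, 0) ms) <= zdeg m) ms.
  case: ms zsorted {base upper} => //= m0 s /(order_path_min zdeg_leq_trans) ->;
  by rewrite leqnn.
set c := zdeg _ in c_min base upper.
have x_lt_trans : transitive (fun a b : mon => xdeg a < xdeg b).
  by move=> ? ? ?; apply: ltn_trans.
have x_gt_trans : transitive (fun a b : mon => xdeg b < xdeg a).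
  by move=> ? ? ? ab bc; apply: ltn_trans bc ab.
case: (ltngtP l c) => [lt_lc | lt_cl | ->].
- exists pred0; suff -> : level ms l = [::] by [].
  apply/eqP; rewrite -[_ == _]negbK -has_filter; apply/hasPn => m /(allP c_min).
  by apply: contraTneq => ->; rewrite -ltnNge.
- case: (eqVneq (level ms l) [::]) => [-> | nonempty]; first by exists pred0.
  have [m1 [_ _ _ lev [sorted_below sorted_above]]] := upper l lt_cl nonempty.
  exists (fun h => xdeg m1 < xdeg h); rewrite lev.
  set B := below (level ms l) m1 in sorted_below *.
  set A := above (level ms l) m1 in sorted_above *.
  have B_lt h : h \in B -> xdeg h < xdeg m1 by rewrite mem_filter => /andP[].
  have A_gt h : h \in A -> xdeg m1 < xdeg h by rewrite mem_filter => /andP[].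
  rewrite pairwise_cons pairwise_cat all_cat.
  apply/and4P; split.
  + apply/andP; split; apply/allP => h hin; rewrite /xbeyond.
      by rewrite ltnNge ltnW ?B_lt.
    by rewrite A_gt.
  + apply/allrelP => w h wB hA; rewrite /xbeyond A_gt //.
    exact: ltn_trans (B_lt w wB) (A_gt h hA).
  + rewrite sorted_pairwise // in sorted_below.
    apply: (@sub_in_pairwise _ (mem B) _ _ _ B _ sorted_below); last exact/allP.
    by move=> w h _ hB hw; rewrite /xbeyond ltnNge ltnW ?B_lt.
  + rewrite sorted_pairwise // in sorted_above.
    apply: (@sub_in_pairwise _ (mem A) _ _ _ A _ sorted_above); last exact/allP.
    by move=> w h _ hA hw; rewrite /xbeyond A_gt.
- by exists pred0; rewrite sorted_pairwise in base.
Qed.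

Lemma tree_ordered_not_between ms u v h :
  tree_ordered ms -> u \in ms -> v \in ms -> h \in ms ->
  zdeg u = zdeg h -> zdeg v = zdeg h ->
  index u ms < index h ms -> index v ms < index h ms ->
  ~~ (xdeg u < xdeg h < xdeg v).
Proof.
move=> tree ums vms hms zu zv uh vh.
have [up] := tree_ordered_level (zdeg h) tree; rewrite /level pairwise_filterE => lev.
move: (pairwise_index lev ums hms uh) (pairwise_index lev vms hms vh).
by rewrite /xbeyond zu zv eqxx; case: (up h) => /=; lia.
Qed.

Lemma tree_ordered_lcm_divisor_index ms d u v h :
  all (fun m => mdeg m == d) ms -> tree_ordered ms ->
  u \in ms -> v \in ms -> h \in ms -> zdeg u = zdeg v -> mdivides h (mlcm u v) ->
  index h ms <= maxn (index u ms) (index v ms).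
Proof.
move=> ms_deg tree ums vms hms zuv hb; rewrite leqNgt gtn_max; apply/andP=> -[uh vh].
have zh : zdeg h <= zdeg u by move: hb; mon_lia.
have [zlt | zeq] : zdeg h < zdeg u \/ zdeg h = zdeg u by lia.
  have := sorted_leq_index zdeg_leq_trans (fun=> leqnn _) tree.1 _ _ ums hms (ltnW uh).
  by rewrite leqNgt zlt.
have hu : h != u by apply: contraTneq uh => ->; rewrite ltnn.
have hv : h != v by apply: contraTneq vh => ->; rewrite ltnn.
have zv : zdeg v = zdeg h by rewrite zeq zuv.
have := lcm_divisor_between _ _ zeq (etrans zeq zuv) hb hu hv.
rewrite !(mdeg_gen ms_deg) //.
rewrite (negPf (tree_ordered_not_between tree ums vms hms (esym zeq) zv uh vh)).
rewrite (negPf (tree_ordered_not_between tree vms ums hms zv (esym zeq) vh uh)).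
by move/(_ erefl erefl).
Qed.

Lemma mem_mingens_eqdeg J d h :
  (forall m, m \in J -> mdeg m = d) -> (h \in mingens J) = (h \in J).
Proof.
move=> J_deg; rewrite /mingens mem_filter mem_undup andbC.
case hJ: (h \in J) => //=; apply/hasPn => g gJ; apply/negP => /andP[/eqP gh gdiv].
by apply: gh; apply: mdivides_eq_of_deg gdiv _; rewrite !J_deg.
Qed.

Lemma GJfg_vertices_take ms d j u v h :
  all (fun m => mdeg m == d) ms -> tree_ordered ms ->
  u \in take j ms -> v \in take j ms -> zdeg u = zdeg v ->
  (h \in GJfg_vertices (take j ms) u v) = gens_dividing ms (mlcm u v) h.
Proof.
move=> ms_deg tree uj vj zuv.
have [ums vms] := (mem_take uj, mem_take vj).
rewrite /GJfg_vertices mem_filter (@mem_mingens_eqdeg _ d); last first.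
  by move=> m /mem_take; apply: mdeg_gen.
rewrite /gens_dividing andbC; case hb: (mdivides h _); rewrite ?andbF ?andbT //.
apply/idP/idP => [/mem_take // | hms]; rewrite in_take //.
apply: leq_ltn_trans (tree_ordered_lcm_divisor_index ms_deg tree ums vms hms zuv hb) _.
by rewrite gtn_max -(in_take _ ums) -(in_take _ vms) uj vj.
Qed.

Unset Implicit Arguments.

Theorem mainTheorem5 (k : fieldType) (d : nat) (ms : seq mon) :
  uniq ms ->
  all (fun m => mdeg m == d) ms ->
  linear_resolution k d ms ->
  tree_ordered ms ->
  forall j : nat, (2 <= j <= size ms)%N ->
  forall u v : mon,
    u \in mingens (take j ms) -> v \in mingens (take j ms) ->
    zdeg u = zdeg v ->
    induced_connected (GJfg_vertices (take j ms) u v).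
Proof.
move=> _ ms_deg ms_lin tree j _ u v.
have take_deg m : m \in take j ms -> mdeg m = d by move/mem_take; apply: mdeg_gen.
rewrite !(mem_mingens_eqdeg _ take_deg) => uj vj zuv.
apply: induced_connected_of_linked => a c.
rewrite !(GJfg_vertices_take _ ms_deg tree uj vj zuv) => aW cW.
apply: linked_sub (gens_dividing_linked ms_deg ms_lin aW cW) => x.
by rewrite /= (GJfg_vertices_take _ ms_deg tree uj vj zuv).
Qed.
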